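(* Let $G=(V,E)$ be a finite simple graph of order $n$, let $T=n-1$, and let $k$ be an integer with $k\leq\mathrm{PT}(G)$. If $(x,y,z)$ is an optimal solution of the integer program with the constraints of the Time Step Model $\mathrm{TSM}(G,T)$ together with the additional constraint $\sum_{t\in[T]}z^t\geq k$, and objective ''minimize $\sum_{v\in V}x^0_v+\frac{1}{2T}\sum_{t\in[T]}z^t$'', then $C=\{v\in V\colon x^0_v=1\}$ is a minimum zero forcing set of $G$ with $\mathrm{pt}(G,C)=\sum_{t\in[T]}z^t\geq k$. Furthermore, there is no minimum zero forcing set $\hat C$ of $G$ with $k<\mathrm{pt}(G,\hat C)<\mathrm{pt}(G,C)$.
   Context: Zero forcing: under the standard color change rule a filled vertex $u$ can force a non-filled vertex $v$ if $v$ is the only non-filled neighbor of $u$; $C\subseteq V$ is a zero forcing set if, starting with $C$ filled and repeatedly forcing, all of $V$ becomes filled; a minimum zero forcing set is one of minimum size. The propagation time $\mathrm{pt}(G,C)$ is the smallest $t^*$ such that, starting from $C^{[0]}=C$ and setting $C^{[t]}=C^{[t-1]}\cup\{v\notin C^{[t-1]}\colon$ some $u\in C^{[t-1]}$ has $v$ as its only neighbor outside $C^{[t-1]}\}$, one has $C^{[t^*]}=V$ ($\infty$ if $C$ is not a zero forcing set). $\mathrm{PT}(G)=\max\{\mathrm{pt}(G,C)\colon C$ a minimum zero forcing set$\}$. $N(u)$ is the neighborhood of $u$ and $d(u)=|N(u)|$. Time Step Model constraints: $A$ is the set of arcs containing $(u,v)$ and $(v,u)$ for each edge $\{u,v\}$,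 $[T]=\{1,\dots,T\}$. Binary variables $x^t_v$ ($v\in V$, $t\in\{0,\dots,T\}$), $y^t_a$ ($a\in A$, $t\in[T]$), $z^t$ ($t\in[T]$), with constraints: (1) $x^0_v+\sum_{t\in[T]}\sum_{a=(u,v)\in A}y^t_a=1$ for all $v$; (2) $y^t_a\leq x^{t-1}_u$ for all $a=(u,v)\in A$, $t\in[T]$; (3) $y^t_a\leq x^{t-1}_w$ for all $a=(u,v)\in A$, $w\in N(u)\setminus\{v\}$, $t\in[T]$; (4) $x^t_v=x^{t-1}_v+\sum_{a=(u,v)\in A}y^t_a$ for all $v$, $t\in[T]$; (5) $x^{t-1}_u-x^{t-1}_v+\sum_{w\in N(u)\setminus\{v\}}x^{t-1}_w\leq\sum_{a=(w,v)\in A}y^t_a+d(u)-1$ for all $(u,v)\in A$, $t\in[T]$; (6) $\frac1n\sum_{v\in V}(x^t_v-x^{t-1}_v)-z^t\leq0$ for all $t\in[T]$; (7) $z^t-\sum_{v\in V}(x^t_v-x^{t-1}_v)\leq 0$ for all $t\in[T]$. *)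

(* Graph G = (V, e) with V : finType, e : rel V symmetric and irreflexive. *)
From HB Require Import structures.
From mathcomp Require Import all_boot all_order all_algebra.
Set Implicit Arguments. Unset Strict Implicit. Unset Printing Implicit Defensive.
Import Order.TTheory GRing.Theory Num.Theory.

Section ZF.
Variables (V : finType) (e : rel V).

Definition nbhd (u : V) : {set V} := [set w | e u w].
Definition deg (u : V) : nat := #|nbhd u|.

Definition can_force (C : {set V}) (u v : V) : bool :=
  [&& u \in C, e u v, v \notin C & [forall w, (e u w && (w != v)) ==> (w \in C)]].

Definition forceable (C : {set V}) (v : V) : bool := [exists u, can_force C u v].

Fixpoint forcing_seq_fills (C : {set V}) (s : seq V) : bool :=
  if s is v :: s' then forceable C v && forcing_seq_fills (v |: C) s'
  else C == [set: V].

Definition zero_forcing_set (C : {set V}) : Prop :=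
  exists s : seq V, forcing_seq_fills C s.

Definition min_zero_forcing_set (C : {set V}) : Prop :=
  zero_forcing_set C /\ forall D : {set V}, zero_forcing_set D -> #|C| <= #|D|.

Definition prop_step (C : {set V}) : {set V} := C :|: [set v | forceable C v].
Definition C_at (C : {set V}) (t : nat) : {set V} := iter t prop_step C.

(* pt(G, C) = t  (finite value); pt(G,C) = ∞ iff no such t exists *)
Definition pt_is (C : {set V}) (t : nat) : Prop :=
  C_at C t = [set: V] /\ forall s, s < t -> C_at C s <> [set: V].

Definition PT_is (p : nat) : Prop :=
  (exists C, min_zero_forcing_set C /\ pt_is C p) /\
  (forall C t, min_zero_forcing_set C -> pt_is C t -> t <= p).

Local Open Scope ring_scope.

(* Time Step Model TSM(G, T) with additional constraint sum z >= k.
   x t v = x^t_v (t = 0..T), y t u v = y^t_(u,v) (t in [T], (u,v) arc),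
   z t = z^t (t in [T]); binary variables are booleans, read as 0/1 in rat. *)
Definition bR (b : bool) : rat := (b : nat)%:R.

Definition inflow (y : nat -> V -> V -> bool) (t : nat) (v : V) : rat :=
  \sum_(u | e u v) bR (y t u v).

Definition TSM_feasible (T : nat) (x : nat -> V -> bool)
    (y : nat -> V -> V -> bool) (z : nat -> bool) : Prop :=
  (forall v, bR (x 0%N v) + \sum_(1 <= t < T.+1) inflow y t v = 1) /\
  (forall u v t, e u v -> (1 <= t <= T)%N ->
                  bR (y t u v) <= bR (x t.-1 u)) /\
  (forall u v w t, e u v -> e u w -> w != v -> (1 <= t <= T)%N ->
                  bR (y t u v) <= bR (x t.-1 w)) /\
  (forall v t, (1 <= t <= T)%N ->
                  bR (x t v) = bR (x t.-1 v) + inflow y t v) /\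
  (forall u v t, e u v -> (1 <= t <= T)%N ->
                  bR (x t.-1 u) - bR (x t.-1 v)
                    + \sum_(w | e u w && (w != v)) bR (x t.-1 w)
                  <= inflow y t v + (deg u)%:R - 1) /\
  (forall t, (1 <= t <= T)%N ->
                  (#|V|%:R)^-1 * \sum_(v : V) (bR (x t v) - bR (x t.-1 v))
                    - bR (z t) <= 0) /\
  (forall t, (1 <= t <= T)%N ->
                  bR (z t) - \sum_(v : V) (bR (x t v) - bR (x t.-1 v)) <= 0).

Definition z_sum (T : nat) (z : nat -> bool) : nat := \sum_(1 <= t < T.+1) (z t : nat).

Definition IP_feasible (T : nat) (k : int) x y z : Prop :=
  TSM_feasible T x y z /\ k%:~R <= ((z_sum T z)%:R : rat).

Definition IP_objective (T : nat) (x : nat -> V -> bool) (z : nat -> bool) : rat :=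
  \sum_(v : V) bR (x 0%N v) + ((2 * T)%:R)^-1 * \sum_(1 <= t < T.+1) bR (z t).

Definition IP_optimal (T : nat) (k : int) x y z : Prop :=
  IP_feasible T k x y z /\
  forall x' y' z', IP_feasible T k x' y' z' ->
    IP_objective T x z <= IP_objective T x' z'.

End ZF.

From HB Require Import structures.
From mathcomp Require Import all_boot all_order all_algebra.
From mathcomp Require Import lra zify.
Import Order.TTheory GRing.Theory Num.Theory.
Set Implicit Arguments. Unset Strict Implicit.

(* For 0/1 values, constraints (1)-(7) of TSM(G,T) say exactly that the sets
   X^t = {v | x^t_v = 1} are the propagation sets C^[t] of C = X^0, that
   C^[T] = V, and that z^t = 1 iff step t fills a vertex, so sum z^t = pt(G,C).
   Conversely every C with pt(G,C) <= T yields such a solution, and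
   pt(G,C) <= n - 1 = T always holds.  As 0 <= sum z^t <= T, the weight 1/(2T)
   makes the objective lexicographic: it minimises |C| first, then pt(G,C).
   A minimum zero forcing set of propagation time PT(G) >= k is feasible, which
   pins |C| to the zero forcing number. *)

Section Propagation.
Variables (V : finType) (e : rel V).
Implicit Types X Y : {set V}.

Lemma subset_prop_step X : X \subset prop_step e X.
Proof. exact: subsetUl. Qed.

Lemma forceable_notin X v : forceable e X v -> v \notin X.
Proof. by case/existsP=> u /and4P[]. Qed.

Lemma prop_stepS X Y : X \subset Y -> prop_step e X \subset prop_step e Y.
Proof.
move=> sXY; apply/subsetP=> v; rewrite !inE.
case/orP=> [vX | /existsP[u /and4P[uX euv vX /forallP uXv]]].
  by rewrite (subsetP sXY).
case vY: (v \in Y) => //=; apply/existsP; exists u.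
rewrite /can_force (subsetP sXY) // euv vY /=.
apply/forallP=> w; apply/implyP=> hw; apply: (subsetP sXY).
exact: (implyP (uXv w)).
Qed.

Lemma prop_step0 : prop_step e set0 = set0.
Proof.
apply/setP=> v; rewrite !inE /=; apply/negbTE/existsPn => u.
by rewrite /can_force inE.
Qed.

Lemma C_atS X t : C_at e X t.+1 = prop_step e (C_at e X t).
Proof. by rewrite /C_at iterS. Qed.

Lemma C_at_leq X s t : (s <= t)%N -> C_at e X s \subset C_at e X t.
Proof.
move/subnK=> <-; elim: (t - s)%N => [|d IH]; first by rewrite add0n.
by rewrite addSn C_atS (subset_trans IH) // subset_prop_step.
Qed.

Lemma C_at_setS X Y t : X \subset Y -> C_at e X t \subset C_at e Y t.
Proof. by move=> sXY; elim: t => // t IH; rewrite !C_atS prop_stepS. Qed.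

Lemma C_at_stable X t s : prop_step e (C_at e X t) = C_at e X t ->
  (t <= s)%N -> C_at e X s = C_at e X t.
Proof.
move=> fixXt /subnK <-; elim: (s - t)%N => [|d IH]; first by rewrite add0n.
by rewrite addSn C_atS IH fixXt.
Qed.

Lemma C_at_full X t s : C_at e X t = [set: V] -> (t <= s)%N ->
  C_at e X s = [set: V].
Proof. by move=> fullXt ts; apply/eqP; rewrite eqEsubset subsetT -fullXt C_at_leq. Qed.

Lemma pt_is_proper X p s : pt_is e X p -> (s < p)%N ->
  C_at e X s \proper C_at e X s.+1.
Proof.
case=> fullXp notfull sp; rewrite properEneq C_at_leq // andbT.
apply/negP=> /eqP eqXs.
have fixXs : prop_step e (C_at e X s) = C_at e X s by rewrite -C_atS -eqXs.
by apply: (notfull s sp); rewrite -(C_at_stable fixXs (ltnW sp)).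
Qed.

Lemma card_C_at X p s : pt_is e X p -> (s < p)%N -> (s < #|C_at e X s|)%N.
Proof.
move=> ptXp; elim: s => [|s IH] sp.
  rewrite card_gt0; apply/negP=> /eqP X0.
  by have := pt_is_proper ptXp sp; rewrite C_atS X0 prop_step0 properE subxx.
exact: leq_ltn_trans (IH (ltnW sp)) (proper_card (pt_is_proper ptXp (ltnW sp))).
Qed.

Lemma pt_is_le_card X p : pt_is e X p -> (p <= #|V|.-1)%N.
Proof.
case: p => [//|p] ptXp.
have notfull : C_at e X p \proper [set: V].
  by rewrite properT; apply/eqP; case: ptXp => _; apply.
have := leq_ltn_trans (card_C_at ptXp (ltnSn p)) (proper_card notfull).
by rewrite cardsT; case: #|V|.
Qed.

Lemma zero_forcing_C_at X t : C_at e X t = [set: V] -> zero_forcing_set e X.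
Proof.
move: {2}#|~: X| (leqnn #|~: X|) => n; elim: n X => [|n IH] X.
  rewrite leqn0 cards_eq0 -setCT (inj_eq (@setC_inj _)) => /eqP-> _.
  by exists [::]; rewrite /= eqxx.
move=> cardXc fullXt.
have [XT | XnT] := eqVneq X [set: V]; first by exists [::]; rewrite /= XT.
have : ~~ (prop_step e X \subset X).
  apply: contra XnT => sub; rewrite -[X]/(C_at e X 0) -fullXt.
  by rewrite (@C_at_stable X 0 t) //; apply/eqP; rewrite eqEsubset sub subset_prop_step.
case/subsetPn=> v; rewrite !inE => /orP[-> //| fv vX].
have [s fills] : zero_forcing_set e (v |: X).
  apply: IH; last first.
    by apply/eqP; rewrite eqEsubset subsetT -fullXt C_at_setS // subsetUr.
  rewrite -ltnS (leq_trans _ cardXc) // proper_card // setCU properEneq subsetIr andbT.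
  by apply/negP=> /eqP/setP/(_ v); rewrite !inE eqxx vX.
by exists (v :: s); rewrite /= fv.
Qed.

Lemma pt_is_exists X t : C_at e X t = [set: V] -> exists2 p, pt_is e X p & (p <= t)%N.
Proof.
move=> fullXt; have ex : exists s, C_at e X s == [set: V] by exists t; rewrite fullXt.
case: (ex_minnP ex) => p /eqP fullXp pmin; exists p; last by rewrite pmin ?fullXt.
by split=> // s sp /eqP fullXs; have := pmin s fullXs; rewrite leqNgt sp.
Qed.

Lemma pt_is_changes X p T : pt_is e X p -> (p <= T)%N ->
  (\sum_(1 <= t < T.+1) (C_at e X t != C_at e X t.-1 : nat))%N = p.
Proof.
move=> ptXp pT; rewrite (big_cat_nat (n := p.+1)) //=.
rewrite (eq_big_nat _ _ (F2 := fun _ => 1%N)); last first.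
  move=> [|t] // /andP[_ tp].
  by have := pt_is_proper ptXp tp; rewrite properEneq eq_sym => /andP[->].
rewrite sum_nat_const_nat subn1 muln1 big_nat big1 ?addn0 // => -[|t] // /andP[pt _].
case: ptXp => fullXp _.
by rewrite !(C_at_full fullXp) // ?eqxx // ltnW.
Qed.

End Propagation.

Local Open Scope ring_scope.

Lemma bRT : bR true = 1. Proof. by []. Qed.
Lemma bRF : bR false = 0. Proof. by []. Qed.
Lemma bR_ge0 b : 0 <= bR b. Proof. by case: b. Qed.
Lemma bR_le1 b : bR b <= 1. Proof. by case: b. Qed.
Lemma bR_ge1 b : (1 <= bR b) = b. Proof. by case: b. Qed.
Lemma bR_le0 b : (bR b <= 0) = ~~ b. Proof. by case: b. Qed.
Lemma bR_le (a b : bool) : (a -> b) -> bR a <= bR b.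
Proof. by case: a; case: b => // /(_ isT). Qed.

Lemma sum_bR (V : finType) (f : V -> bool) :
  \sum_(v : V) bR (f v) = #|[set v | f v]|%:R.
Proof.
rewrite -sum1_card natr_sum [RHS]big_mkcond /=; apply: eq_bigr => v _.
by rewrite inE; case: (f v).
Qed.

Lemma sum_bR_sub (V : finType) (f g : V -> bool) : (forall v, f v -> g v) ->
  \sum_(v : V) (bR (g v) - bR (f v)) = (#|[set v | g v]| - #|[set v | f v]|)%:R.
Proof.
move=> fg; rewrite sumrB !sum_bR natrB // subset_leq_card //.
by apply/subsetP=> v; rewrite !inE; apply: fg.
Qed.

Lemma cards_subn_eq0 (V : finType) (A B : {set V}) : A \subset B ->
  (#|B| - #|A| == 0)%N = (B == A).
Proof. by move=> sAB; rewrite subn_eq0 (geq_leqif (subset_leqif_cards sAB)) eq_sym. Qed.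

Lemma inflow_ge0 (V : finType) (e : rel V) y t v : 0 <= inflow e y t v.
Proof. by apply: sumr_ge0 => u _; apply: bR_ge0. Qed.

Lemma inflow_neq0 (V : finType) (e : rel V) y t v :
  inflow e y t v != 0 -> exists2 u, e u v & y t u v.
Proof.
case: (pickP (fun u => e u v && y t u v)) => [u /andP[euv yuv] _ | none].
  by exists u.
rewrite /inflow big1 ?eqxx // => u euv.
by have := none u; rewrite euv /= => /negbT/negbTE ->.
Qed.

Lemma deg_split (V : finType) (e : rel V) u v : e u v ->
  (deg e u)%:R = 1 + \sum_(w | e u w && (w != v)) (1 : rat).
Proof.
move=> euv; rewrite /deg -sumr_const (bigD1 v) ?inE //=; congr (_ + _).
by apply: eq_bigl => w; rewrite inE.
Qed.

Lemma sum_bR_le (V : finType) (P : pred V) (f : V -> bool) :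
  \sum_(w | P w) bR (f w) <= \sum_(w | P w) 1.
Proof. by apply: ler_sum => w _; apply: bR_le1. Qed.

Lemma sum_bR_lt (V : finType) (P : pred V) (f : V -> bool) w0 :
  P w0 -> ~~ f w0 -> \sum_(w | P w) bR (f w) <= \sum_(w | P w) 1 - 1.
Proof.
move=> Pw0 fw0; rewrite (bigD1 w0) //= [X in _ <= X - _](bigD1 w0) //= (negbTE fw0).
have := sum_bR_le (fun w => P w && (w != w0)) f; rewrite bRF; lra.
Qed.

Lemma force_constraintP (V : finType) (e : rel V) (f : V -> bool) u v (a : rat) :
  e u v -> 0 <= a ->
  bR (f u) - bR (f v) + \sum_(w | e u w && (w != v)) bR (f w)
    <= a + (deg e u)%:R - 1
  <-> (can_force e [set w | f w] u v -> 1 <= a).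
Proof.
move=> euv a_ge0; rewrite (deg_split euv); set P := fun w => e u w && (w != v).
have := sum_bR_le P f; split=> [constr | force].
  case/and4P; rewrite !inE => fu _ fv /forallP others.
  move: constr; rewrite fu (negbTE fv) bRT bRF (eq_bigr (fun=> 1)) => [|w Pw].
    lra.
  by have := implyP (others w) Pw; rewrite inE => ->.
have := bR_ge0 (f v); case fu: (f u); rewrite ?bRT ?bRF; last by lra.
case fv: (f v); rewrite ?bRT ?bRF; first by lra.
have [others | /forallPn[w0]] := boolP [forall w, P w ==> f w].
  have : 1 <= a.
    apply: force; rewrite /can_force !inE fu euv fv /=.
    by apply/forallP => w; rewrite inE; apply: (forallP others).
  lra.
rewrite negb_imply => /andP[Pw0 fw0]; have := sum_bR_lt Pw0 fw0; lra.
Qed.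

(* Constraints (6) and (7), for a step filling [m] of the [n] vertices. *)
Lemma change_constraintsP (n m : nat) (b : bool) : (m <= n)%N ->
  (n%:R^-1 * m%:R - bR b <= 0 /\ bR b - m%:R <= 0 :> rat) <-> b = (m != 0%N).
Proof.
move=> mn; case: (posnP m) => [-> | m_gt0].
  by rewrite mulr0 sub0r oppr_le0 subr0 bR_le0; case: b; split=> // -[].
have n_gt0 : (0 < n)%N by apply: leq_trans mn.
have wm_le1 : n%:R^-1 * m%:R <= 1 :> rat.
  by rewrite ler_pdivrMl ?ltr0n // mulr1 ler_nat.
have wm_gt0 : 0 < n%:R^-1 * m%:R :> rat.
  by rewrite mulr_gt0 ?invr_gt0 ?ltr0n.
have m_ge1 : 1 <= m%:R :> rat by rewrite ler1n.
case: b; rewrite ?bRT ?bRF; split=> //; lra.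
Qed.

Section Soundness.
Variables (V : finType) (e : rel V) (T : nat).
Variables (x : nat -> V -> bool) (y : nat -> V -> V -> bool) (z : nat -> bool).
Hypothesis feas : TSM_feasible e T x y z.

Let filled_once := proj1 feas.
Let force_from_filled := proj1 (proj2 feas).
Let force_others_filled := proj1 (proj2 (proj2 feas)).
Let fill_update := proj1 (proj2 (proj2 (proj2 feas))).
Let force_fills := proj1 (proj2 (proj2 (proj2 (proj2 feas)))).
Let change_lower := proj1 (proj2 (proj2 (proj2 (proj2 (proj2 feas))))).
Let change_upper := proj2 (proj2 (proj2 (proj2 (proj2 (proj2 feas))))).

Lemma TSM_inflow v t : (1 <= t <= T)%N ->
  inflow e y t v = bR (x t v) - bR (x t.-1 v).
Proof. by move=> tT; rewrite fill_update // addrC addKr. Qed.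

Lemma TSM_mono t v : (1 <= t <= T)%N -> x t.-1 v -> x t v.
Proof.
by move=> tT xv; have := inflow_ge0 e y t v; rewrite TSM_inflow // xv subr_ge0 bR_ge1.
Qed.

Lemma TSM_prop_step t : (1 <= t <= T)%N ->
  [set v | x t v] = prop_step e [set v | x t.-1 v].
Proof.
move=> tT; apply/setP => v; rewrite /prop_step !inE.
case xv: (x t.-1 v) => /=; first exact: TSM_mono.
have inflow_v : inflow e y t v = bR (x t v) by rewrite TSM_inflow // xv subr0.
apply/idP/idP => [xtv | /existsP[u force_uv]].
  have [u euv yuv] : exists2 u, e u v & y t u v.
    by apply: inflow_neq0; rewrite inflow_v; case: (x t v) xtv.
  have xu : x t.-1 u by have := force_from_filled euv tT; rewrite yuv bR_ge1.
  apply/existsP; exists u; rewrite /can_force !inE xu xv euv /=.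
  apply/forallP => w; apply/implyP => /andP[euw wv]; rewrite inE.
  by have := force_others_filled euv euw wv tT; rewrite yuv bR_ge1.
have euv : e u v by case/and4P: force_uv.
have := (force_constraintP (x t.-1) euv (inflow_ge0 e y t v)).1 (force_fills euv tT).
by rewrite inflow_v bR_ge1; apply.
Qed.

Lemma TSM_C_at t : (t <= T)%N -> [set v | x t v] = C_at e [set v | x 0 v] t.
Proof.
elim: t => [// | t IH] tT.
rewrite C_atS -IH; last exact: ltnW.
exact: (@TSM_prop_step t.+1).
Qed.

Lemma TSM_full : C_at e [set v | x 0 v] T = [set: V].
Proof.
rewrite -(TSM_C_at (leqnn T)); apply/setP => v; rewrite !inE.
have sum_inflow : \sum_(1 <= t < T.+1) inflow e y t v = bR (x T v) - bR (x 0 v).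
  rewrite big_add1 /= -(telescope_sumr (fun t => bR (x t v))) //.
  by apply: eq_big_nat => t /andP[_ tT]; rewrite TSM_inflow.
by have := filled_once v; rewrite sum_inflow addrC subrK; case: (x T v).
Qed.

Lemma TSM_change t : (1 <= t <= T)%N ->
  z t = ([set v | x t v] != [set v | x t.-1 v]).
Proof.
move=> tT; have sub : [set v | x t.-1 v] \subset [set v | x t v].
  by apply/subsetP => v; rewrite !inE; apply: TSM_mono.
rewrite -(cards_subn_eq0 sub); apply/(@change_constraintsP #|V|).
  exact: leq_trans (leq_subr _ _) (max_card _).
rewrite -sum_bR_sub => [|v]; last exact: TSM_mono.
by split; [apply: change_lower | apply: change_upper].
Qed.

Lemma TSM_pt : pt_is e [set v | x 0 v] (z_sum T z).
Proof.
have [p ptp pT] := pt_is_exists TSM_full.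
suff -> : z_sum T z = p by [].
rewrite -(pt_is_changes ptp pT); apply: eq_big_nat => t tT.
have /andP[_ t_le_T] := tT.
by rewrite TSM_change // -(TSM_C_at t_le_T) -(TSM_C_at (leq_trans (leq_pred t) t_le_T)).
Qed.

End Soundness.

Section Completeness.
Variables (V : finType) (e : rel V) (D : {set V}).

Definition x_of t v := v \in C_at e D t.
Definition y_of t u v := [pick w | can_force e (C_at e D t.-1) w v] == Some u.
Definition z_of t := C_at e D t != C_at e D t.-1.

Lemma x_of_set t : [set v | x_of t v] = C_at e D t.
Proof. by apply/setP => v; rewrite inE. Qed.

Lemma x_of_mono t v : x_of t.-1 v -> x_of t v.
Proof. by apply: (subsetP (C_at_leq e D (leq_pred t))). Qed.

Lemma y_of_can_force t u v : y_of t u v -> can_force e (C_at e D t.-1) u v.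
Proof. by rewrite /y_of; case: pickP => [w force_wv /eqP[<-] | _]. Qed.

Lemma inflow_y_of t v : inflow e y_of t v = bR (forceable e (C_at e D t.-1) v).
Proof.
rewrite /inflow /y_of /forceable; case: pickP => [u0 force_u0 | none].
  have -> : [exists u, can_force e (C_at e D t.-1) u v] by apply/existsP; exists u0.
  have euv : e u0 v by case/and4P: force_u0.
  rewrite (bigD1 u0) //= eqxx big1 ?addr0 // => u /andP[_ ne].
  by rewrite (inj_eq Some_inj) eq_sym (negbTE ne).
have -> : [exists u, can_force e (C_at e D t.-1) u v] = false.
  by apply/negbTE/existsPn => u; rewrite none.
by rewrite big1.
Qed.

Lemma x_of_update v t : (0 < t)%N ->
  bR (x_of t v) = bR (x_of t.-1 v) + inflow e y_of t v.
Proof.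
case: t => [//|t] _; rewrite inflow_y_of /x_of C_atS /prop_step /= !inE.
case: (boolP (v \in C_at e D t)) => [vX | _] /=; last by rewrite add0r.
by have := @forceable_notin _ e (C_at e D t) v; rewrite vX; case: forceable => // /(_ isT).
Qed.

Lemma x_of_force_constraint u v t : e u v ->
  bR (x_of t.-1 u) - bR (x_of t.-1 v) + \sum_(w | e u w && (w != v)) bR (x_of t.-1 w)
    <= inflow e y_of t v + (deg e u)%:R - 1.
Proof.
move=> euv; apply/(force_constraintP _ euv (inflow_ge0 _ _ _ _)).
rewrite x_of_set inflow_y_of bR_ge1 => force_uv.
by apply/existsP; exists u.
Qed.

Lemma z_of_constraints t : (0 < t)%N ->
  #|V|%:R^-1 * \sum_v (bR (x_of t v) - bR (x_of t.-1 v)) - bR (z_of t) <= 0 /\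
  bR (z_of t) - \sum_v (bR (x_of t v) - bR (x_of t.-1 v)) <= 0.
Proof.
move=> t_gt0; rewrite sum_bR_sub => [|v]; last exact: x_of_mono.
apply/change_constraintsP; first exact: leq_trans (leq_subr _ _) (max_card _).
rewrite !x_of_set cards_subn_eq0 //.
exact: C_at_leq (leq_pred t).
Qed.

Lemma TSM_of_full T : C_at e D T = [set: V] -> TSM_feasible e T x_of y_of z_of.
Proof.
move=> fullT; split.
  move=> v; have step t : inflow e y_of t.+1 v = bR (x_of t.+1 v) - bR (x_of t v).
    by rewrite x_of_update // addrC addKr.
  rewrite big_add1 /= (eq_bigr _ (fun t _ => step t)) telescope_sumr //.
  by rewrite addrC subrK /x_of fullT inE.
split.
  move=> u v t _ _; apply: bR_le => /y_of_can_force; rewrite /x_of; by case/and4P.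
split.
  move=> u v w t _ euw wv _; apply: bR_le => /y_of_can_force /and4P[_ _ _ /forallP /(_ w)].
  by rewrite euw wv.
split; first by move=> v t /andP[t_gt0 _]; apply: x_of_update.
split; first by move=> u v t euv _; apply: x_of_force_constraint.
split; move=> t /andP[t_gt0 _]; by have [] := z_of_constraints t_gt0.
Qed.

End Completeness.

Lemma IP_objectiveE (V : finType) T (x : nat -> V -> bool) z :
  IP_objective T x z = #|[set v | x 0%N v]|%:R + ((2 * T)%:R)^-1 * (z_sum T z)%:R.
Proof. by rewrite /IP_objective sum_bR /z_sum natr_sum. Qed.

Lemma IP_optimal_le_pt (V : finType) (e : rel V) T k x y z D q :
  IP_optimal e T k x y z -> pt_is e D q -> (q <= T)%N -> k <= q%:Z ->
  IP_objective T x z <= #|D|%:R + ((2 * T)%:R)^-1 * q%:R.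
Proof.
move=> [_ opt] ptq qT kq.
have feasD : TSM_feasible e T (x_of e D) (y_of e D) (z_of e D).
  by apply: TSM_of_full; case: ptq => fullq _; apply: C_at_full fullq qT.
have zsD : z_sum T (z_of e D) = q := pt_is_changes ptq qT.
have cardD : #|D| = #|[set v | x_of e D 0 v]| by rewrite x_of_set.
rewrite -zsD cardD -IP_objectiveE.
rewrite -(ler_int rat) in kq.
by apply: (opt _ (y_of e D)); split; rewrite ?zsD.
Qed.

Lemma weighted_lex (T a b s q : nat) : (s <= T)%N -> (q <= T)%N ->
  a%:R + ((2 * T)%:R)^-1 * s%:R <= b%:R + ((2 * T)%:R)^-1 * q%:R :> rat ->
  (a < b)%N || (a == b) && (s <= q)%N.
Proof.
move=> sT qT ineq; case: (posnP T) => [T0 | T_gt0].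
  move: sT qT ineq; rewrite T0 !leqn0 => /eqP-> /eqP->.
  by rewrite !mulr0 !addr0 ler_nat leq_eqVlt orbC andbT.
set w := ((2 * T)%:R)^-1 : rat.
have w_gt0 : 0 < w by rewrite invr_gt0 ltr0n muln_gt0.
have ws_ge0 : 0 <= w * s%:R by rewrite mulr_ge0 ?ler0n ?ltW.
have wq_lt1 : w * q%:R < 1.
  rewrite ltr_pdivrMl ?ltr0n ?muln_gt0 // mulr1 ltr_nat; lia.
case: ltngtP => [// | ba | ab]; last by move: ineq; rewrite ab lerD2l ler_pM2l // ler_nat.
have ba1 : b%:R + 1 <= a%:R :> rat by rewrite natr1 ler_nat.
have : b%:R + w * q%:R < a%:R + w * s%:R by lra.
by rewrite ltNge ineq.
Qed.

Theorem corollary4p8 (V : finType) (e : rel V)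
    (e_sym : symmetric e) (e_irr : irreflexive e) (k : int)
    (hk : exists p : nat, PT_is e p /\ k <= p%:Z)
    (x : nat -> V -> bool) (y : nat -> V -> V -> bool) (z : nat -> bool)
    (hopt : IP_optimal e (#|V|.-1) k x y z) :
  let T := #|V|.-1 in
  let C := [set v | x 0%N v] in
  [/\ min_zero_forcing_set e C,
      pt_is e C (z_sum T z),
      k <= (z_sum T z)%:Z
    & forall (Ch : {set V}) (t : nat), min_zero_forcing_set e Ch -> pt_is e Ch t ->
        ~ (k < t%:Z /\ (t < z_sum T z)%N)].
Proof.
move=> T C; have [[feas k_le_zs] _] := hopt.
have ptC : pt_is e C (z_sum T z) := TSM_pt feas.
have lex D q : pt_is e D q -> k <= q%:Z ->
    (#|C| < #|D|)%N || (#|C| == #|D|) && (z_sum T z <= q)%N.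
  move=> ptq kq; have qT := pt_is_le_card ptq.
  apply: (weighted_lex (pt_is_le_card ptC) qT).
  by rewrite -IP_objectiveE; apply: IP_optimal_le_pt hopt ptq qT kq.
have [p [[[C0 [minC0 ptC0]] _] kp]] := hk.
have minC : min_zero_forcing_set e C.
  split=> [|D zfD]; first exact: zero_forcing_C_at (TSM_full feas).
  apply: leq_trans (minC0.2 D zfD).
  by case/orP: (lex C0 p ptC0 kp) => [/ltnW | /andP[/eqP-> _]].
split=> //; first by rewrite -(ler_int rat).
move=> Ch t minCh ptCh [kt tzs].
have cardCh : #|Ch| = #|C|.
  by apply/eqP; rewrite eqn_leq (minCh.2 _ minC.1) (minC.2 _ minCh.1).
by have := lex Ch t ptCh (ltW kt); rewrite cardCh ltnn eqxx leqNgt tzs.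
Qed.
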